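(* Let $\mathcal{G} = \{G_1, \ldots, G_p\}$ and $\mathcal{H} = \{H_1, \ldots, H_q\}$ be families of connected graphs such that the graphs in $\mathcal{G}$ are mutually cospectral, the graphs in $\mathcal{H}$ are mutually cospectral, and the common spectrum of the graphs in $\mathcal{G}$ differs from the common spectrum of the graphs in $\mathcal{H}$. Suppose at least one of the following conditions holds: (1) every graph in $\mathcal{G} \cup \mathcal{H}$ is Cartesian prime; (2) $\gcd(|V(G)|, |V(H)|) = 1$ for all $G \in \mathcal{G}$ and $H \in \mathcal{H}$; (3) there is no Cartesian prime graph $P$ that is a Cartesian factor of both some $G \in \mathcal{G}$ and some $H \in \mathcal{H}$. Then the graphs $F_{ij} = G_i \square H_j$, $1 \le i \le p$, $1 \le j \le q$, are connected, all have the same spectrum, and are pairwise non-isomorphic; that is, $\mathcal{F} = \{F_{ij}\}$ is a connected mutually cospectral family of size $pq$.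
   Context: All graphs are finite and simple. Spectra are taken with respect to a fixed choice of matrix representation: either the adjacency matrix or the Laplacian matrix (the same choice throughout). Two graphs are cospectral if they have the same spectrum and are non-isomorphic; a family of graphs is mutually cospectral if its members all have the same spectrum and are pairwise non-isomorphic. $G \square H$ denotes the Cartesian product. A graph is Cartesian prime if it is nontrivial (at least two vertices) and is not isomorphic to a Cartesian product of two nontrivial graphs. A Cartesian factor of $G$ is a graph $G_1$ with $G \cong G_1 \square G_2$ for some graph $G_2$. Connected graphs have a unique (up to isomorphism and order) factorization into Cartesian prime graphs. *)

From HB Require Import structures.
From mathcomp Require Import all_boot all_order all_algebra.
Unset Printing Implicit Defensive.
Import GRing.Theory.
Local Open Scope ring_scope.

Record graph := Graph {
  gV : finType;
  gE : rel gV;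
  gE_sym : symmetric gE;
  gE_irr : irreflexive gE }.
Arguments gE : clear implicits.
Arguments gE_sym : clear implicits.
Arguments gE_irr : clear implicits.

Definition isomorphic (G H : graph) : Prop :=
  exists f : gV G -> gV H, bijective f /\ forall x y, gE G x y = gE H (f x) (f y).

Definition connected (G : graph) : Prop :=
  (0 < #|gV G|)%N /\ forall x y : gV G, connect (gE G) x y.

Definition nontrivial (G : graph) : Prop := (1 < #|gV G|)%N.

Definition cprod_rel (G H : graph) : rel (gV G * gV H) :=
  fun u v => ((u.1 == v.1) && gE H u.2 v.2) || ((u.2 == v.2) && gE G u.1 v.1).

Lemma cprod_sym G H : symmetric (cprod_rel G H).
Proof.
move=> [a b] [c d]; rewrite /cprod_rel /= (eq_sym a) (eq_sym b).
by rewrite (gE_sym H b) (gE_sym G a).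
Qed.

Lemma cprod_irr G H : irreflexive (cprod_rel G H).
Proof. by move=> [a b]; rewrite /cprod_rel /= !(gE_irr G) !(gE_irr H) !andbF. Qed.

Definition cprod (G H : graph) : graph :=
  @Graph (gV G * gV H)%type (cprod_rel G H) (@cprod_sym G H) (@cprod_irr G H).

Definition cart_prime (G : graph) : Prop :=
  nontrivial G /\
  ~ (exists G1 G2 : graph, nontrivial G1 /\ nontrivial G2 /\ isomorphic G (cprod G1 G2)).

Definition cart_factor (G1 G : graph) : Prop :=
  exists G2 : graph, isomorphic G (cprod G1 G2).

Inductive mat_kind := Adjacency | Laplacian.

Definition vidx {G : graph} (i : 'I_#|gV G|) : gV G := enum_val i.

Definition adj_mx (G : graph) : 'M[int]_#|gV G| :=
  \matrix_(i, j) ((gE G (vidx i) (vidx j) : nat)%:Z).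

Definition degree {G : graph} (x : gV G) : nat := #|[set y | gE G x y]|.

Definition lap_mx (G : graph) : 'M[int]_#|gV G| :=
  \matrix_(i, j) ((if i == j then (degree (vidx i))%:Z else 0) -
                  (gE G (vidx i) (vidx j) : nat)%:Z).

Definition rep_mx (m : mat_kind) (G : graph) : 'M[int]_#|gV G| :=
  match m with Adjacency => adj_mx G | Laplacian => lap_mx G end.

(* The spectrum (multiset of eigenvalues, with multiplicity) is encoded by
   the characteristic polynomial of the chosen matrix. *)
Definition spectrum (m : mat_kind) (G : graph) : {poly int} := char_poly (rep_mx m G).

Definition same_spectrum (m : mat_kind) (G H : graph) : Prop :=
  spectrum m G = spectrum m H.

Definition mutually_cospectral (m : mat_kind) {I : finType} (F : I -> graph) : Prop :=
  (forall i j, same_spectrum m (F i) (F j)) /\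
  (forall i j, i != j -> ~ isomorphic (F i) (F j)).

From mathcomp Require Import all_boot all_order all_algebra.
From mathcomp Require Import perm algC sesquilinear spectral.
From Stdlib Require Import Classical_Prop.

(* Unique factorization enters through a refinement property: if A, B, C, D
   are connected and f : A □ B ≅ C □ D, colour each edge of A □ B by the
   factor of C □ D along which its image moves.  Opposite edges of every
   square of A □ B get the same colour, so by connectivity the colour of an
   A-edge does not depend on its B-coordinate, and vice versa; the fibres of
   the colouring then give A ≅ P □ Q, B ≅ R □ S, C ≅ P □ R and D ≅ Q □ S.
   Each of the three hypotheses (under (1) together with G_i ≇ H_l, which
   follows from the different spectra) forbids a nontrivial common factor
   of G_i and H_l, so G_i □ H_j ≅ G_k □ H_l forces i = k and j = l.
   The matrix of G □ H is the Kronecker sum M_G ⊗ I + I ⊗ M_H of symmetric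
   matrices; diagonalizing both factors shows that its eigenvalues are the
   sums λ + μ, so the spectrum of G □ H only depends on those of G and H. *)

Set Implicit Arguments.
Unset Strict Implicit.
Import GRing.Theory.

(** * Isomorphisms and Cartesian products *)

Definition iso_maps (X Y : graph) (f : gV X -> gV Y) (g : gV Y -> gV X) : Prop :=
  [/\ cancel f g, cancel g f & forall x y, gE X x y = gE Y (f x) (f y)].

Lemma iso_mapsW X Y f g : @iso_maps X Y f g -> isomorphic X Y.
Proof. by case=> fK gK fE; exists f; split=> //; exists g. Qed.

Lemma isomorphicP X Y : isomorphic X Y -> exists f g, @iso_maps X Y f g.
Proof. by case=> f [[g fK gK] fE]; exists f, g. Qed.

Lemma iso_maps_sym X Y f g : @iso_maps X Y f g -> iso_maps g f.
Proof. by case=> fK gK fE; split=> // x y; rewrite fE !gK. Qed.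

Lemma iso_maps_comp X Y Z f g f' g' :
  @iso_maps X Y f g -> @iso_maps Y Z f' g' -> iso_maps (f' \o f) (g \o g').
Proof.
case=> fK gK fE [fK' gK' fE'].
by split=> [x|z|x y] /=; rewrite ?fK' ?fK ?gK ?gK' ?fE ?fE'.
Qed.

Lemma iso_refl X : isomorphic X X.
Proof. by apply: (@iso_mapsW X X id id). Qed.

Lemma iso_sym X Y : isomorphic X Y -> isomorphic Y X.
Proof. by case/isomorphicP=> f [g /iso_maps_sym/iso_mapsW]. Qed.

Lemma iso_trans X Y Z : isomorphic X Y -> isomorphic Y Z -> isomorphic X Z.
Proof.
case/isomorphicP=> f [g fgI] /isomorphicP[f' [g' fgI']].
exact: iso_mapsW (iso_maps_comp fgI fgI').
Qed.

Lemma iso_card X Y : isomorphic X Y -> #|gV X| = #|gV Y|.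
Proof. by case=> f [fB _]; exact: bij_eq_card fB. Qed.

Lemma card_cprod G H : #|gV (cprod G H)| = (#|gV G| * #|gV H|)%N.
Proof. exact: card_prod. Qed.

Lemma iso_maps_cprodC A B :
  iso_maps (X := cprod A B) (Y := cprod B A) swap_pair swap_pair.
Proof. by split=> [[]|[]|[a b] [a' b']] //; rewrite /= /cprod_rel orbC. Qed.

Lemma cprodC A B : isomorphic (cprod A B) (cprod B A).
Proof. exact: iso_mapsW (iso_maps_cprodC A B). Qed.

Lemma cprodA A B C : isomorphic (cprod (cprod A B) C) (cprod A (cprod B C)).
Proof.
apply: (@iso_mapsW (cprod (cprod A B) C) (cprod A (cprod B C))
   (fun x => (x.1.1, (x.1.2, x.2))) (fun x => ((x.1, x.2.1), x.2.2))).
split=> [[[a b] c]|[a [b c]]|[[a b] c] [[a' b'] c']] //.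
rewrite /= /cprod_rel /= /cprod_rel /= !xpair_eqE.
by case: (a == a'); case: (b == b'); case: (c == c');
  case: (gE A a a'); case: (gE B b b'); case: (gE C c c').
Qed.

Lemma cprod_iso A A' B B' : isomorphic A A' -> isomorphic B B' ->
  isomorphic (cprod A B) (cprod A' B').
Proof.
case/isomorphicP=> f [g [fK gK fE]] /isomorphicP[f' [g' [fK' gK' fE']]].
apply: (@iso_mapsW (cprod A B) (cprod A' B') (fun x => (f x.1, f' x.2))
         (fun x => (g x.1, g' x.2))).
split=> [[a b]|[a b]|[a b] [a' b']] /=; rewrite ?fK ?fK' ?gK ?gK' //.
by rewrite /cprod_rel /= fE fE' (can_eq fK) (can_eq fK').
Qed.

Lemma cprod_card1 G K : #|gV K| = 1%N -> isomorphic (cprod G K) G.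
Proof.
move=> K1; have [k0 _] : exists k0 : gV K, true by apply/card_gt0P; rewrite K1.
have k0P k : k = k0 by apply: (@card_le1_eqP _ (gV K)); rewrite ?K1 ?inE.
apply: (@iso_mapsW (cprod G K) G fst (fun a => (a, k0))).
split=> [[a k]|a|[a k] [a' k']] //=; first by rewrite (k0P k).
by rewrite /cprod_rel /= (k0P k) (k0P k') eqxx gE_irr andbF.
Qed.

Lemma connect_homo (T T' : finType) (e : rel T) (e' : rel T') (h : T -> T') :
  (forall x y, e x y -> connect e' (h x) (h y)) ->
  forall x y, connect e x y -> connect e' (h x) (h y).
Proof.
move=> he x y /connectP[p]; elim: p x => [|z p IHp] x /=; first by move=> _ ->.
by case/andP=> /he exz /IHp zy /zy; apply: connect_trans.
Qed.

Lemma connect_invariant (T : finType) (T' : eqType) (e : rel T) (k : T -> T') :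
  (forall x y, e x y -> k x = k y) -> forall x y, connect e x y -> k x = k y.
Proof.
move=> ke x y xy; have cl : closed e [pred z | k z == k x].
  by move=> u v /ke; rewrite !inE => ->.
by have := closed_connect cl xy; rewrite !inE eqxx => /esym/eqP.
Qed.

Lemma cprod_connected G H : connected G -> connected H -> connected (cprod G H).
Proof.
move=> [G0 cG] [H0 cH]; split=> [|[a b] [a' b']]; first by rewrite card_cprod muln_gt0 G0.
apply: (@connect_trans _ _ (a', b)).
  apply: (@connect_homo _ _ _ _ (fun x => (x, b)) _ _ _ (cG a a')) => x y xy.
  by apply: connect1; rewrite /= /cprod_rel /= eqxx xy orbT.
apply: (@connect_homo _ _ _ _ (fun y => (a', y)) _ _ _ (cH b b')) => x y xy.
by apply: connect1; rewrite /= /cprod_rel /= eqxx xy.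
Qed.

Definition induced (G : graph) (P : pred (gV G)) : graph :=
  @Graph {x : gV G | P x} (fun x y => gE G (val x) (val y))
    (fun x y => gE_sym G (val x) (val y)) (fun x => gE_irr G (val x)).

Lemma induced_iso X Y f g (P : pred (gV X)) (Q : pred (gV Y)) :
  @iso_maps X Y f g -> (forall x, Q (f x) = P x) ->
  isomorphic (induced P) (induced Q).
Proof.
move=> [fK gK fE] QfP; have PgQ y : P (g y) = Q y by rewrite -QfP gK.
apply: (@iso_mapsW (induced P) (induced Q)
  (fun x => Sub (f (val x)) (etrans (QfP _) (valP x)))
  (fun y => Sub (g (val y)) (etrans (PgQ _) (valP y)))).
by split=> [x|y|x x'] /=; try apply: val_inj; rewrite /= ?fK ?gK ?fE.
Qed.

Lemma induced_cprod_slice A B (P : pred (gV A)) (b0 : gV B) :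
  isomorphic (induced P) (induced (G := cprod A B) [pred x | P x.1 && (x.2 == b0)]).
Proof.
have sliceP (x : {x | P x}) : P (val x, b0).1 && ((val x, b0).2 == b0).
  by rewrite /= (valP x) eqxx.
apply: (@iso_mapsW (induced P) (induced (G := cprod A B) _)
  (fun x => Sub (val x, b0) (sliceP x))
  (fun y => Sub (val y).1 (proj1 (andP (valP y))))).
split=> [x|y|x x']; try apply: val_inj => //=.
  by case: y => [[a b] /= /andP[_ /eqP ->]].
by rewrite /induced /= /cprod_rel /= eqxx gE_irr andbF.
Qed.

(** * Refining two factorizations *)

Definition rook_step (T1 T2 : eqType) (x y : T1 * T2) : Prop :=
  (x.1 == y.1) = (x.2 != y.2).

Lemma cprod_rook_step A B (x y : gV A * gV B) : gE (cprod A B) x y -> rook_step x y.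
Proof.
rewrite /rook_step /= /cprod_rel; case/orP=> /andP[/eqP-> xy]; rewrite eqxx.
  by case: eqP xy => // ->; rewrite gE_irr.
by case: eqP xy => // ->; rewrite gE_irr.
Qed.

Lemma rook_step_sym (T1 T2 : eqType) (x y : T1 * T2) : rook_step x y -> rook_step y x.
Proof. by rewrite /rook_step => xy; rewrite eq_sym xy eq_sym. Qed.

Lemma rook_square_dir (T1 T2 : eqType) (y1 y2 y3 y4 : T1 * T2) :
  rook_step y1 y2 -> rook_step y2 y3 -> rook_step y3 y4 -> rook_step y4 y1 ->
  y1 != y3 -> y2 != y4 -> y1.2 == y2.2 -> y4.2 == y3.2.
Proof.
case: y1 y2 y3 y4 => [c1 d1] [c2 d2] [c3 d3] [c4 d4]; rewrite /rook_step /=.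
move=> s12 s23 s34 s41 n13 n24 /eqP e12; apply/negPn/negP => n43.
have /eqP c34 : c3 == c4 by rewrite s34 eq_sym.
case: (eqVneq d2 d3) => e23.
  case: (eqVneq d4 d1) => e41; first by move: n43; rewrite e41 e12 e23 eqxx.
  have /eqP c41 : c4 == c1 by rewrite s41.
  by move: n13; rewrite xpair_eqE c34 c41 e12 e23 !eqxx.
have /eqP c23 : c2 == c3 by rewrite s23.
case: (eqVneq d4 d1) => e41.
  by move: n24; rewrite xpair_eqE c23 c34 e41 e12 !eqxx.
have /eqP c41 : c4 == c1 by rewrite s41.
by move: s12; rewrite e12 eqxx c23 c34 c41 eqxx.
Qed.

Lemma rook_square (T1 T2 : eqType) (y1 y2 y3 y4 : T1 * T2) :
  rook_step y1 y2 -> rook_step y2 y3 -> rook_step y3 y4 -> rook_step y4 y1 ->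
  y1 != y3 -> y2 != y4 -> (y1.2 == y2.2) = (y4.2 == y3.2).
Proof.
move=> s12 s23 s34 s41 y13 y24; apply/idP/idP; first exact: rook_square_dir.
apply: (rook_square_dir (rook_step_sym s34) (rook_step_sym s23) (rook_step_sym s12)
                        (rook_step_sym s41)); by rewrite eq_sym.
Qed.

Definition fibreA A B C D (f : gV A * gV B -> gV C * gV D) a0 b0 : graph :=
  induced [pred a | (f (a, b0)).2 == (f (a0, b0)).2].

Definition fibreB A B C D (f : gV A * gV B -> gV C * gV D) a0 b0 : graph :=
  induced [pred b | (f (a0, b)).2 == (f (a0, b0)).2].

Lemma fibreA_iso A B C D f g a0 b0 :
  @iso_maps (cprod A B) (cprod C D) f g ->
  isomorphic (fibreA f a0 b0) (fibreA g (f (a0, b0)).1 (f (a0, b0)).2).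
Proof.
move=> fgI; have [fK gK _] := fgI.
(* Both sides are the vertices of A × {b0} mapped into C × {(f (a0, b0)).2}. *)
have g0 : g ((f (a0, b0)).1, (f (a0, b0)).2) = (a0, b0) by rewrite -surjective_pairing fK.
apply: iso_trans (induced_cprod_slice _ b0) _.
apply: iso_trans (iso_sym (induced_cprod_slice _ (f (a0, b0)).2)); rewrite g0.
apply: induced_iso fgI _ => -[a b] /=.
apply/andP/andP=> [[/eqP gb /eqP fd]|[/eqP fd /eqP bb]].
  have bb : b = b0 by move: gb; rewrite -fd -surjective_pairing fK.
  by subst b; split; rewrite ?fd eqxx.
by subst b; split; rewrite -fd -?surjective_pairing ?fK eqxx.
Qed.

Section Splitting.
Variables A B C D : graph.
Variables (f : gV A * gV B -> gV C * gV D) (g : gV C * gV D -> gV A * gV B).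
Hypothesis fgI : iso_maps (X := cprod A B) (Y := cprod C D) f g.
Variables (a0 : gV A) (b0 : gV B).
Hypotheses (connA : connected A) (connB : connected B) (connC : connected C).

Local Notation d x := (f x).2.
Local Notation d0 := (f (a0, b0)).2.

Lemma f_rook_step x y : gE (cprod A B) x y -> rook_step (f x) (f y).
Proof. by case: fgI => _ _ fE; rewrite fE; apply: cprod_rook_step. Qed.

Lemma f_neq x y : x != y -> f x != f y.
Proof. by case: fgI => fK _ _; rewrite (can_eq fK). Qed.

Lemma colourA_square a a' b b' : gE A a a' -> gE B b b' ->
  (d (a, b) == d (a', b)) = (d (a, b') == d (a', b')).
Proof.
move=> aa' bb'; have a'a : gE A a' a by rewrite gE_sym.
have b'b : gE B b' b by rewrite gE_sym.
have neqA : a != a' by apply: contraTneq aa' => ->; rewrite gE_irr.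
apply: rook_square; try apply: f_rook_step;
  rewrite /= /cprod_rel /= ?eqxx ?aa' ?a'a ?bb' ?b'b ?orbT //.
- by apply: f_neq; rewrite xpair_eqE (negbTE neqA).
by apply: f_neq; rewrite xpair_eqE eq_sym (negbTE neqA).
Qed.

Lemma colourB_square a a' b b' : gE A a a' -> gE B b b' ->
  (d (a, b) == d (a, b')) = (d (a', b) == d (a', b')).
Proof.
move=> aa' bb'; have a'a : gE A a' a by rewrite gE_sym.
have b'b : gE B b' b by rewrite gE_sym.
have neqA : a != a' by apply: contraTneq aa' => ->; rewrite gE_irr.
apply: rook_square; try apply: f_rook_step;
  rewrite /= /cprod_rel /= ?eqxx ?aa' ?a'a ?bb' ?b'b ?orbT //.
- by apply: f_neq; rewrite xpair_eqE (negbTE neqA).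
by apply: f_neq; rewrite xpair_eqE (negbTE neqA).
Qed.

Lemma colourA_const a a' b : gE A a a' ->
  (d (a, b0) == d (a', b0)) = (d (a, b) == d (a', b)).
Proof.
move=> aa'; have cl : closed (gE B) [pred y | d (a, y) == d (a', y)].
  by move=> y y' yy'; rewrite !inE (colourA_square aa' yy').
by have := closed_connect cl (connB.2 b0 b); rewrite !inE.
Qed.

Lemma colourB_const b b' a : gE B b b' ->
  (d (a0, b) == d (a0, b')) = (d (a, b) == d (a, b')).
Proof.
move=> bb'; have cl : closed (gE A) [pred x | d (x, b) == d (x, b')].
  by move=> x x' xx'; rewrite !inE (colourB_square xx' bb').
by have := closed_connect cl (connA.2 a0 a); rewrite !inE.
Qed.

Definition edgeC : rel (gV A * gV B) := fun x y => gE (cprod A B) x y && (d x == d y).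

Lemma edgeC_row x y b : edgeC x y -> d (x.1, b) = d (y.1, b).
Proof.
case: x y => [a1 b1] [a2 b2]; rewrite /edgeC /= /cprod_rel /=.
case/andP=> /orP[/andP[/eqP-> _] _ //|/andP[/eqP<- a12] /eqP d12].
by apply/eqP; rewrite -(colourA_const _ a12) (colourA_const b1 a12) d12.
Qed.

Lemma edgeC_col x y a : edgeC x y -> d (a, x.2) = d (a, y.2).
Proof.
case: x y => [a1 b1] [a2 b2]; rewrite /edgeC /= /cprod_rel /=.
case/andP=> /orP[/andP[/eqP<- b12] /eqP d12|/andP[/eqP-> _] _ //].
by apply/eqP; rewrite -(colourB_const _ b12) (colourB_const a1 b12) d12.
Qed.

Lemma connect_edgeC x : d x = d0 -> connect edgeC (a0, b0) x.
Proof.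
case: fgI => fK gK fE dx.
have lift c c' : gE C c c' -> connect edgeC (g (c, d0)) (g (c', d0)).
  move=> cc'; apply: connect1; rewrite /edgeC fE !gK /= eqxx andbT.
  by rewrite /cprod_rel /= eqxx cc' orbT.
have := @connect_homo _ _ _ _ _ lift _ _ (connC.2 (f (a0, b0)).1 (f x).1).
by rewrite -surjective_pairing fK -dx -surjective_pairing fK.
Qed.

Lemma d_eq_d0 a b : (d (a, b) == d0) = (d (a, b0) == d0) && (d (a0, b) == d0).
Proof.
have row b' :=
  connect_invariant (k := fun x => d (x.1, b')) (fun x y => @edgeC_row x y b').
have col a' :=
  connect_invariant (k := fun x => d (a', x.2)) (fun x y => @edgeC_col x y a').
apply/idP/andP => [/eqP/connect_edgeC ab|[/eqP/connect_edgeC ab0 /eqP a0b]].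
  by split; [rewrite -(row b0 _ _ ab) | rewrite -(col a0 _ _ ab)].
by rewrite -(row b _ _ ab0) /= a0b.
Qed.

Lemma cprod_fibres_iso : isomorphic (cprod (fibreA f a0 b0) (fibreB f a0 b0)) C.
Proof.
have [fK gK fE] := fgI.
have dK (p : gV (fibreA f a0 b0)) (r : gV (fibreB f a0 b0)) : d (val p, val r) = d0.
  by apply/eqP; rewrite d_eq_d0; apply/andP; split; [exact: valP p | exact: valP r].
have gfK x : d x = d0 -> g ((f x).1, d0) = x by move=> <-; rewrite -surjective_pairing fK.
have p0 : a0 \in [pred a | d (a, b0) == d0] by rewrite inE.
have r0 : b0 \in [pred b | d (a0, b) == d0] by rewrite inE.
apply: (@iso_mapsW (cprod (fibreA f a0 b0) (fibreB f a0 b0)) C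
   (fun x => (f (val x.1, val x.2)).1)
   (fun c => (insubd (Sub a0 p0) (g (c, d0)).1, insubd (Sub b0 r0) (g (c, d0)).2))).
split=> [[p r]|c|[p r] [p' r']] /=.
- by congr (_, _); apply: val_inj; rewrite /= gfK ?dK // insubdK //; apply: valP.
- have : d (g (c, d0)) == d0 by rewrite gK.
  rewrite [g _]surjective_pairing d_eq_d0 => /andP[pc rc].
  by rewrite !insubdK //= -surjective_pairing gK.
have -> : cprod_rel (fibreA f a0 b0) (fibreB f a0 b0) (p, r) (p', r') =
          gE (cprod A B) (val p, val r) (val p', val r') by [].
by rewrite fE /= /cprod_rel (surjective_pairing (f _)) !dK eqxx gE_irr andbF.
Qed.
End Splitting.

Theorem cprod_refinement A B C D :
  connected A -> connected B -> connected C -> connected D ->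
  isomorphic (cprod A B) (cprod C D) ->
  exists P Q R S : graph, [/\ isomorphic A (cprod P Q), isomorphic B (cprod R S),
    isomorphic C (cprod P R) & isomorphic D (cprod Q S)].
Proof.
move=> cA cB cC cD /isomorphicP[f [g fgI]].
have /card_gt0P[a0 _] := cA.1; have /card_gt0P[b0 _] := cB.1.
(* A and B are split by g and swap_pair \o g; [fibreB h a b] is convertible
   to [fibreA (h \o swap_pair) b a], so fibreA_iso identifies all fibres. *)
have gfI := iso_maps_sym fgI.
have sfI := iso_maps_comp fgI (iso_maps_cprodC C D).
have sgI := iso_maps_comp gfI (iso_maps_cprodC A B).
have fsI := iso_maps_comp (iso_maps_cprodC B A) fgI.
have sfsI := iso_maps_comp fsI (iso_maps_cprodC C D).
exists (fibreA f a0 b0), (fibreA (swap_pair \o f) a0 b0),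
       (fibreB f a0 b0), (fibreB (swap_pair \o f) a0 b0).
split.
- have := cprod_fibres_iso gfI (f (a0, b0)).1 (f (a0, b0)).2 cC cD cA.
  move/iso_sym/iso_trans; apply.
  apply: cprod_iso; apply: iso_sym; first exact: fibreA_iso a0 b0 fgI.
  exact: fibreA_iso a0 b0 sfI.
- have := cprod_fibres_iso sgI (f (a0, b0)).1 (f (a0, b0)).2 cC cD cB.
  move/iso_sym/iso_trans; apply.
  apply: cprod_iso; apply: iso_sym; first exact: fibreA_iso b0 a0 fsI.
  exact: fibreA_iso b0 a0 sfsI.
- exact: iso_sym (cprod_fibres_iso fgI a0 b0 cA cB cC).
exact: iso_sym (cprod_fibres_iso sfI a0 b0 cA cB cD).
Qed.

(** * Cartesian factors and cancellation *)

Definition K1 : graph :=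
  @Graph unit (fun _ _ => false) (fun _ _ => erefl) (fun _ => erefl).

Lemma cart_factor_refl G : cart_factor G G.
Proof. by exists K1; apply: iso_sym; apply: cprod_card1; rewrite card_unit. Qed.

Lemma cart_factor_trans P R G T :
  cart_factor P R -> isomorphic G (cprod R T) -> cart_factor P G.
Proof.
case=> U RPU GRT; exists (cprod U T).
apply: iso_trans GRT (iso_trans (cprod_iso RPU (iso_refl T)) (cprodA P U T)).
Qed.

Lemma cart_prime_factor R : nontrivial R -> exists P, cart_prime P /\ cart_factor P R.
Proof.
move: {2}#|gV R| (leqnn #|gV R|) => n; elim: n R => [|n IHn] R leRn ntR.
  by move: ntR; rewrite /nontrivial; case: #|gV R| leRn.
have [Rprime|Rcomp] := classic (cart_prime R).
  by exists R; split; last exact: cart_factor_refl.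
have [G1 [G2 [ntG1 [ntG2 RG]]]] :
    exists G1 G2, nontrivial G1 /\ nontrivial G2 /\ isomorphic R (cprod G1 G2).
  by apply: NNPP => Rprime; apply: Rcomp.
have ltG1R : #|gV G1| < #|gV R|.
  by rewrite (iso_card RG) card_cprod -{1}(muln1 #|gV G1|) ltn_pmul2l // ltnW.
have [P [Pprime PG1]] := IHn G1 (leq_trans ltG1R leRn) ntG1.
by exists P; split; last exact: cart_factor_trans PG1 RG.
Qed.

Lemma trivial_card1 G : 0 < #|gV G| -> ~ nontrivial G -> #|gV G| = 1%N.
Proof. by rewrite /nontrivial; case: #|gV G| => [|[|n]]. Qed.

Lemma cprod_factors_gt0 G P Q : 0 < #|gV G| -> isomorphic G (cprod P Q) ->
  0 < #|gV P| /\ 0 < #|gV Q|.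
Proof. by move=> + /iso_card GPQ; rewrite GPQ card_cprod muln_gt0 => /andP. Qed.

Lemma cprod_trivial_l G P Q : 0 < #|gV G| -> isomorphic G (cprod P Q) ->
  ~ nontrivial P -> isomorphic G Q.
Proof.
move=> G0 GPQ ntP; have [P0 _] := cprod_factors_gt0 G0 GPQ.
apply: iso_trans (iso_trans GPQ (cprodC P Q)) (cprod_card1 _ _).
exact: trivial_card1.
Qed.

Definition cart_coprime (X Y : graph) : Prop :=
  forall P Q S, isomorphic X (cprod P Q) -> isomorphic Y (cprod Q S) -> ~ nontrivial Q.

Lemma cart_coprime_prime X Y :
  cart_prime X -> cart_prime Y -> ~ isomorphic X Y -> cart_coprime X Y.
Proof.
move=> [ntX Xprime] [ntY Yprime] nXY P Q S XPQ YQS ntQ; apply: nXY.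
have X0 : 0 < #|gV X| by apply: ltnW.
have Y0 : 0 < #|gV Y| by apply: ltnW.
have XQ : isomorphic X Q.
  by apply: (cprod_trivial_l X0 XPQ) => ntP; apply: Xprime; exists P, Q.
have YQ : isomorphic Y Q.
  apply: (cprod_trivial_l Y0 (iso_trans YQS (cprodC Q S))) => ntS.
  by apply: Yprime; exists Q, S.
exact: iso_trans XQ (iso_sym YQ).
Qed.

Lemma cart_coprime_card X Y : coprime #|gV X| #|gV Y| -> cart_coprime X Y.
Proof.
move=> coXY P Q S /iso_card XPQ /iso_card YQS ntQ.
have : #|gV Q| %| gcdn #|gV X| #|gV Y|.
  by rewrite dvdn_gcd XPQ YQS !card_cprod dvdn_mull ?dvdn_mulr.
by rewrite (eqP coXY) dvdn1 => /eqP Q1; rewrite /nontrivial Q1 in ntQ.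
Qed.

Lemma cart_coprime_factor X Y :
  ~ (exists P, cart_prime P /\ cart_factor P X /\ cart_factor P Y) -> cart_coprime X Y.
Proof.
move=> noP P Q S XPQ YQS /cart_prime_factor[R [Rprime RQ]]; apply: noP.
exists R; split=> //; split; last exact: cart_factor_trans RQ YQS.
exact: cart_factor_trans RQ (iso_trans XPQ (cprodC P Q)).
Qed.

Lemma cprod_cancel A B C D :
  connected A -> connected B -> connected C -> connected D ->
  isomorphic (cprod A B) (cprod C D) -> cart_coprime A D -> cart_coprime C B ->
  isomorphic A C /\ isomorphic B D.
Proof.
move=> cA cB cC cD ABCD coAD coCB.
have [P [Q [R [S [APQ BRS CPR DQS]]]]] := cprod_refinement cA cB cC cD ABCD.
have AP : isomorphic A P.
  exact: cprod_trivial_l cA.1 (iso_trans APQ (cprodC P Q)) (coAD _ _ _ APQ DQS).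
have CP : isomorphic C P.
  exact: cprod_trivial_l cC.1 (iso_trans CPR (cprodC P R)) (coCB _ _ _ CPR BRS).
have BS : isomorphic B S := cprod_trivial_l cB.1 BRS (coCB _ _ _ CPR BRS).
have DS : isomorphic D S := cprod_trivial_l cD.1 DQS (coAD _ _ _ APQ DQS).
by split; [exact: iso_trans AP (iso_sym CP) | exact: iso_trans BS (iso_sym DS)].
Qed.

(** * Spectra of Cartesian products *)

Local Open Scope ring_scope.

Section RelationMatrices.
Variable R : comNzRingType.

Definition mxof (T : finType) (M : T -> T -> R) : 'M[R]_#|T| :=
  \matrix_(i, j) M (enum_val i) (enum_val j).

Lemma char_poly_conj n (A P Q : 'M[R]_n) : P *m Q = 1%:M ->
  char_poly (P *m A *m Q) = char_poly A.
Proof.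
move=> PQ; have PQX : map_mx polyC P *m map_mx polyC Q = 1%:M.
  by rewrite -map_mxM PQ map_mx1.
rewrite /char_poly; have -> : char_poly_mx (P *m A *m Q) =
    map_mx polyC P *m char_poly_mx A *m map_mx polyC Q.
  rewrite /char_poly_mx mulmxBr mulmxBl !map_mxM mul_mx_scalar -scalemxAl.
  by congr (_ - _); rewrite PQX scalemx1.
by rewrite !det_mulmx mulrAC -det_mulmx PQX det1 mul1r.
Qed.

Lemma char_poly_reindex n m (A : 'M[R]_n) (B : 'M[R]_m) (h : 'I_n -> 'I_m) :
  bijective h -> (forall i j, B (h i) (h j) = A i j) -> char_poly A = char_poly B.
Proof.
move=> hB BA; have nm : n = m by rewrite -[n]card_ord -[m]card_ord; apply: bij_eq_card hB.
subst m; pose s := perm (bij_inj hB).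
have -> : A = perm_mx s *m B *m perm_mx s^-1.
  by apply/matrixP => i j; rewrite -row_permE -col_permE !mxE !permE BA.
by apply: char_poly_conj; rewrite -perm_mxM mulgV perm_mx1.
Qed.

Lemma char_poly_mxof (T T' : finType) (M : T -> T -> R) (M' : T' -> T' -> R)
    (h : T -> T') : bijective h -> (forall x y, M' (h x) (h y) = M x y) ->
  char_poly (mxof M) = char_poly (mxof M').
Proof.
move=> [k hK kK] M'M.
apply: (@char_poly_reindex _ _ _ _ (fun i => enum_rank (h (enum_val i)))).
  exists (fun j => enum_rank (k (enum_val j))) => i /=.
    by rewrite enum_rankK hK enum_valK.
  by rewrite enum_rankK kK enum_valK.
by move=> i j; rewrite !mxE !enum_rankK M'M.
Qed.

Lemma mxofD (T : finType) (M1 M2 : T -> T -> R) :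
  mxof M1 + mxof M2 = mxof (fun x y => M1 x y + M2 x y).
Proof. by apply/matrixP => i j; rewrite !mxE. Qed.

Definition kron n m (P : 'M[R]_n) (Q : 'M[R]_m) : 'M[R]_#|{: 'I_n * 'I_m}| :=
  mxof (fun x y : 'I_n * 'I_m => P x.1 y.1 * Q x.2 y.2).

Lemma kron_mul n m (P P' : 'M[R]_n) (Q Q' : 'M[R]_m) :
  kron P Q *m kron P' Q' = kron (P *m P') (Q *m Q').
Proof.
apply/matrixP => i j; rewrite !mxE.
under eq_bigr do rewrite !mxE.
set x := enum_val i; set y := enum_val j.
rewrite -(big_enum_val (fun k : 'I_n * 'I_m =>
   P x.1 k.1 * Q x.2 k.2 * (P' k.1 y.1 * Q' k.2 y.2))).
rewrite big_distrlr /= pair_big /=.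
by apply: eq_bigr => -[a b] _ /=; rewrite mulrACA.
Qed.

Lemma kron1 n m : kron (1%:M : 'M[R]_n) (1%:M : 'M[R]_m) = 1%:M.
Proof.
apply/matrixP => i j; rewrite !mxE -natrM mulnb -xpair_eqE -!surjective_pairing.
by rewrite (inj_eq enum_val_inj).
Qed.

Definition ksum n m (A : 'M[R]_n) (B : 'M[R]_m) := kron A 1%:M + kron 1%:M B.

Lemma ksum_conj n m (D U Ui : 'M[R]_n) (E V Vi : 'M[R]_m) :
  Ui *m U = 1%:M -> Vi *m V = 1%:M ->
  ksum (Ui *m D *m U) (Vi *m E *m V) = kron Ui Vi *m ksum D E *m kron U V.
Proof.
by move=> UiU ViV; rewrite /ksum mulmxDr mulmxDl !kron_mul !mulmx1 UiU ViV.
Qed.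

Lemma ksum_diag n m (d : 'rV[R]_n) (e : 'rV[R]_m) :
  ksum (diag_mx d) (diag_mx e) =
  diag_mx (\row_k (d 0 (enum_val k).1 + e 0 (enum_val k).2)).
Proof.
apply/matrixP => i j; rewrite !mxE.
have [<-|nij] := eqVneq i j; first by rewrite !eqxx !mulr1n mulr1 mul1r.
rewrite mulr0n.
have : ((enum_val i).1 != (enum_val j).1) || ((enum_val i).2 != (enum_val j).2).
  by rewrite -negb_and -xpair_eqE -!surjective_pairing (inj_eq enum_val_inj).
by case/orP => /negbTE ->; rewrite ?mulr0n ?mul0r ?mulr0 ?add0r ?addr0.
Qed.

End RelationMatrices.

Lemma map_ksum (R S : comNzRingType) (f : {rmorphism R -> S}) n m
    (A : 'M[R]_n) (B : 'M[R]_m) :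
  map_mx f (ksum A B) = ksum (map_mx f A) (map_mx f B).
Proof. by apply/matrixP => i j; rewrite !mxE rmorphD !rmorphM !rmorph_nat. Qed.

Definition eigenseq n (A : 'M[algC]_n) : seq algC :=
  [seq spectral_diag A 0 i | i <- enum 'I_n].

Lemma char_poly_normal n (A : 'M[algC]_n) : A \is normalmx ->
  char_poly A = \prod_(x <- eigenseq A) ('X - x%:P).
Proof.
move/orthomx_spectralP=> {1}->.
rewrite char_poly_conj ?mulVmx ?spectral_unit // char_poly_trig ?diag_mx_is_trig //.
by rewrite big_map big_enum /=; apply: eq_bigr => i _; rewrite mxE eqxx mulr1n.
Qed.

Lemma char_poly_ksum_normal n m (A : 'M[algC]_n) (B : 'M[algC]_m) :
  A \is normalmx -> B \is normalmx ->
  char_poly (ksum A B) =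
    \prod_(x <- eigenseq A) \prod_(y <- eigenseq B) ('X - (x + y)%:P).
Proof.
move=> /orthomx_spectralP dA /orthomx_spectralP dB.
rewrite [in LHS]dA [in LHS]dB ksum_conj ?mulVmx ?spectral_unit //.
rewrite char_poly_conj; last by rewrite kron_mul !mulVmx ?spectral_unit // kron1.
rewrite ksum_diag char_poly_trig ?diag_mx_is_trig //.
rewrite (eq_bigr (fun k => 'X - (spectral_diag A 0 (enum_val k).1 +
                                  spectral_diag B 0 (enum_val k).2)%:P)); last first.
  by move=> k _; rewrite !mxE eqxx mulr1n.
rewrite -(big_enum_val (fun x : 'I_n * 'I_m =>
  'X - (spectral_diag A 0 x.1 + spectral_diag B 0 x.2)%:P)).
rewrite [RHS]big_map [RHS]big_enum /=.
under [RHS]eq_bigr do rewrite big_map big_enum /=.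
by rewrite [RHS]pair_big.
Qed.

Lemma eigenseq_perm n m (A : 'M[algC]_n) (A' : 'M[algC]_m) :
  A \is normalmx -> A' \is normalmx -> char_poly A = char_poly A' ->
  perm_eq (eigenseq A) (eigenseq A').
Proof. by move=> nA nA'; rewrite !char_poly_normal // => /prod_XsubC_eq. Qed.

Lemma char_poly_ksum_normal_eq n n' m m' (A : 'M[algC]_n) (A' : 'M[algC]_n')
    (B : 'M[algC]_m) (B' : 'M[algC]_m') :
  A \is normalmx -> A' \is normalmx -> B \is normalmx -> B' \is normalmx ->
  char_poly A = char_poly A' -> char_poly B = char_poly B' ->
  char_poly (ksum A B) = char_poly (ksum A' B').
Proof.
move=> nA nA' nB nB' /(eigenseq_perm nA nA') pA /(eigenseq_perm nB nB') pB.
rewrite !char_poly_ksum_normal // (perm_big _ pA); apply: eq_bigr => x _.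
exact: perm_big.
Qed.

Lemma sym_int_normalmx n (A : 'M[int]_n) :
  A^T = A -> map_mx (intr : int -> algC) A \is normalmx.
Proof.
move=> symA; apply: symmetric_normalmx; last by apply/mxOverP => i j; rewrite mxE realz.
apply/is_hermitianmxP; rewrite expr0 scale1r.
by apply/matrixP => i j; rewrite !mxE -[in LHS]symA mxE.
Qed.

Lemma char_poly_ksum_sym n n' m m' (A : 'M[int]_n) (A' : 'M[int]_n')
    (B : 'M[int]_m) (B' : 'M[int]_m') :
  A^T = A -> A'^T = A' -> B^T = B -> B'^T = B' ->
  char_poly A = char_poly A' -> char_poly B = char_poly B' ->
  char_poly (ksum A B) = char_poly (ksum A' B').
Proof.
move=> sA sA' sB sB' eA eB.
apply: (@map_inj_poly _ _ (intr : int -> algC) intr_inj (rmorph0 _)).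
rewrite !map_char_poly !map_ksum.
by apply: char_poly_ksum_normal_eq; rewrite ?sym_int_normalmx // -!map_char_poly ?eA ?eB.
Qed.

Definition rep_entry (m : mat_kind) (G : graph) (x y : gV G) : int :=
  match m with
  | Adjacency => (gE G x y : nat)%:Z
  | Laplacian => (if x == y then (degree x)%:Z else 0) - (gE G x y : nat)%:Z
  end.

Lemma rep_mxE m G : rep_mx m G = mxof (@rep_entry m G).
Proof.
by case: m; apply/matrixP => i j; rewrite !mxE // /rep_entry /vidx (inj_eq enum_val_inj).
Qed.

Lemma rep_mx_sym m G : (rep_mx m G)^T = rep_mx m G.
Proof.
rewrite rep_mxE; apply/matrixP => i j; rewrite !mxE.
by case: m => /=; rewrite gE_sym // eq_sym; case: eqP => // ->.
Qed.

Lemma degree_iso (G H : graph) (f : gV G -> gV H) : bijective f ->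
  (forall x y, gE G x y = gE H (f x) (f y)) -> forall x, degree (f x) = degree x.
Proof.
move=> [g fK gK] fE x; rewrite /degree.
have -> : [set y | gE H (f x) y] = f @: [set y | gE G x y].
  apply/setP => z; rewrite inE -{1}(gK z) -fE.
  by rewrite -{2}(gK z) mem_imset ?inE //; apply: can_inj fK.
by rewrite card_imset //; apply: can_inj fK.
Qed.

Lemma iso_same_spectrum m G H : isomorphic G H -> same_spectrum m G H.
Proof.
case=> f [fB fE]; rewrite /same_spectrum /spectrum !rep_mxE.
apply: (char_poly_mxof fB) => x y; case: m => /=; rewrite -fE //.
by rewrite (inj_eq (bij_inj fB)) (degree_iso fB fE).
Qed.

Lemma degree_cprod (G H : graph) (a : gV G) (b : gV H) :
  @degree (cprod G H) (a, b) = (@degree G a + @degree H b)%N.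
Proof.
rewrite /degree; set NG := [set x | gE G a x]; set NH := [set y | gE H b y].
have -> : [set y | gE (cprod G H) (a, b) y] =
          [set (x, b) | x in NG] :|: [set (a, y) | y in NH].
  apply/setP => -[x y]; rewrite !inE /= /cprod_rel /=.
  apply/orP/orP => [[/andP[/eqP <- by'] | /andP[/eqP <- ax]] | [] /imsetP [z]].
  - by right; apply/imsetP; exists y; rewrite ?inE.
  - by left; apply/imsetP; exists x; rewrite ?inE.
  - by rewrite inE => bz [-> ->]; right; rewrite eqxx bz.
  - by rewrite inE => az [-> ->]; left; rewrite eqxx az.
rewrite cardsU !card_imset; try by move=> u v [].
have -> : [set (x, b) | x in NG] :&: [set (a, y) | y in NH] = set0.
  apply/setP => -[x y]; rewrite !inE; apply/negbTE/negP.
  case/andP=> /imsetP[z az [xz _]] /imsetP[w _ [xa _]].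
  by move: az; rewrite inE -xz xa gE_irr.
by rewrite cards0 subn0.
Qed.

Lemma rep_entry_cprod m (G H : graph) (a a' : gV G) (b b' : gV H) :
  @rep_entry m (cprod G H) (a, b) (a', b') =
  @rep_entry m G a a' * (b == b')%:R + (a == a')%:R * @rep_entry m H b b'.
Proof.
case: m => /=; rewrite /cprod_rel /= ?xpair_eqE.
all: have [<-|na] := eqVneq a a'; have [<-|nb] := eqVneq b b';
  rewrite ?gE_irr /= ?mulr1 ?mul1r ?mulr0 ?mul0r ?addr0 ?add0r ?orbF ?subr0 //.
by rewrite (degree_cprod a b) PoszD.
Qed.

Lemma char_poly_rep_cprod m G H :
  char_poly (rep_mx m (cprod G H)) = char_poly (ksum (rep_mx m G) (rep_mx m H)).
Proof.
rewrite /ksum /kron mxofD rep_mxE.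
apply: (@char_poly_mxof _ _ _ _ _ (fun x => (enum_rank x.1, enum_rank x.2))).
  exists (fun y => (enum_val y.1, enum_val y.2)) => -[u v] /=.
    by rewrite !enum_rankK.
  by rewrite !enum_valK.
move=> [a b] [a' b'] /=; rewrite !rep_mxE !mxE !enum_rankK rep_entry_cprod.
by rewrite !(inj_eq enum_rank_inj).
Qed.

Lemma same_spectrum_cprod m G G' H H' :
  same_spectrum m G G' -> same_spectrum m H H' ->
  same_spectrum m (cprod G H) (cprod G' H').
Proof.
rewrite /same_spectrum /spectrum !char_poly_rep_cprod => eG eH.
by apply: char_poly_ksum_sym; rewrite ?rep_mx_sym.
Qed.

Unset Implicit Arguments.
Set Strict Implicit.

Theorem theorem1 (m : mat_kind) (p q : nat)
    (G : 'I_p -> graph) (H : 'I_q -> graph) :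
  (forall i, connected (G i)) ->
  (forall j, connected (H j)) ->
  mutually_cospectral m G ->
  mutually_cospectral m H ->
  (forall i j, ~ same_spectrum m (G i) (H j)) ->
  ((forall i, cart_prime (G i)) /\ (forall j, cart_prime (H j))) \/
  (forall i j, coprime #|gV (G i)| #|gV (H j)|) \/
  ~ (exists P : graph, cart_prime P /\
        exists i j, cart_factor P (G i) /\ cart_factor P (H j)) ->
  (forall ij : 'I_p * 'I_q, connected (cprod (G ij.1) (H ij.2))) /\
  mutually_cospectral m (fun ij : 'I_p * 'I_q => cprod (G ij.1) (H ij.2)).
Proof.
move=> cG cH [spG nisoG] [spH nisoH] nspGH hyp.
have coGH i j : cart_coprime (G i) (H j).
  have nGH : ~ isomorphic (G i) (H j) by move/(iso_same_spectrum m); apply: nspGH.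
  case: hyp => [[pG pH]|[coV|noP]].
  - exact: cart_coprime_prime.
  - exact: cart_coprime_card.
  apply: cart_coprime_factor => -[P [Pprime [PG PH]]].
  by apply: noP; exists P; split=> //; exists i, j.
split; first by move=> [i j]; apply: cprod_connected.
split; first by move=> [i j] [k l]; apply: same_spectrum_cprod.
move=> [i j] [k l] ijkl /= GHiso.
have [Gik Hjl] := cprod_cancel (cG i) (cH j) (cG k) (cH l) GHiso (coGH i l) (coGH k j).
case: (eqVneq i k) => [eik|nik]; last by case: (nisoG _ _ nik Gik).
case: (eqVneq j l) => [ejl|njl]; last by case: (nisoH _ _ njl Hjl).
by move: ijkl; rewrite eik ejl eqxx.
Qed.
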